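(* Let $\mathcal{X}$ be a complex Euclidean space of dimension $d$, and let $\rho,\sigma$ be positive definite operators on $\mathcal{X}$ with eigenvalues $\lambda_1^\downarrow(\rho)\ge\cdots\ge\lambda_d^\downarrow(\rho)$ and $\lambda_1^\downarrow(\sigma)\ge\cdots\ge\lambda_d^\downarrow(\sigma)$, and let $\lambda_j^\uparrow(\sigma)=\lambda_{d+1-j}^\downarrow(\sigma)$. Then $$\max_{\Phi}S(\Phi(\rho)\,\|\,\sigma)=\operatorname{Tr}(\rho\log\rho)-\sum_{j=1}^d\lambda_j^\downarrow(\rho)\log\lambda_j^\uparrow(\sigma),$$ where the maximum is over all bi-stochastic maps $\Phi$ on the operators on $\mathcal{X}$; in particular this maximum coincides with $\max_{U\in U(\mathcal{X})}S(U\rho U^*\|\sigma)$.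
   Context: A bi-stochastic map (bi-stochastic quantum channel) on $\mathcal{X}$ is a completely positive, trace-preserving, unital linear map $\Phi$ from the operators on $\mathcal{X}$ to themselves ($\Phi(\mathbb{1})=\mathbb{1}$). $U(\mathcal{X})$ denotes the group of unitary operators on $\mathcal{X}$. Logarithms are base 2 and are applied to positive definite operators via their spectral decomposition. For positive definite $P,Q$ on $\mathcal{X}$, the relative entropy is $S(P\|Q)=\operatorname{Tr}(P\log P)-\operatorname{Tr}(P\log Q)$. *)

(* Complex numbers are pairs of reals,
   d x d complex matrices are functions nat -> nat -> C whose entries with
   indices < d are the meaningful ones (equality of operators is [meq d]). *)
From Stdlib Require Import Reals Lra Lia Arith ClassicalEpsilon.
Open Scope R_scope.

Definition C := (R * R)%type.
Definition C0 : C := (0, 0).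
Definition C1 : C := (1, 0).
Definition RtoC (x : R) : C := (x, 0).
Definition Cre (z : C) : R := fst z.
Definition Cadd (z w : C) : C := (fst z + fst w, snd z + snd w).
Definition Cmul (z w : C) : C :=
  (fst z * fst w - snd z * snd w, fst z * snd w + snd z * fst w).
Definition Cconj (z : C) : C := (fst z, - snd z).

Fixpoint csum (n : nat) (f : nat -> C) : C :=
  match n with O => C0 | S m => Cadd (csum m f) (f m) end.
Fixpoint rsum (n : nat) (f : nat -> R) : R :=
  match n with O => 0 | S m => rsum m f + f m end.

Definition Mat := nat -> nat -> C.
Definition meq (d : nat) (A B : Mat) : Prop :=
  forall i j, (i < d)%nat -> (j < d)%nat -> A i j = B i j.
Definition mmul (d : nat) (A B : Mat) : Mat :=
  fun i j => csum d (fun k => Cmul (A i k) (B k j)).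
Definition madd (A B : Mat) : Mat := fun i j => Cadd (A i j) (B i j).
Definition mscale (c : C) (A : Mat) : Mat := fun i j => Cmul c (A i j).
Definition adj (A : Mat) : Mat := fun i j => Cconj (A j i).
Definition idm : Mat := fun i j => if Nat.eqb i j then C1 else C0.
Definition diagm (l : nat -> R) : Mat :=
  fun i j => if Nat.eqb i j then RtoC (l i) else C0.
Definition mtr (d : nat) (A : Mat) : C := csum d (fun i => A i i).

Definition unitary (d : nat) (U : Mat) : Prop :=
  meq d (mmul d (adj U) U) idm /\ meq d (mmul d U (adj U)) idm.
Definition hermitian (d : nat) (A : Mat) : Prop := meq d (adj A) A.
Definition qform (d : nat) (A : Mat) (v : nat -> C) : C :=
  csum d (fun i => Cmul (Cconj (v i)) (csum d (fun j => Cmul (A i j) (v j)))).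
Definition psd (d : nat) (A : Mat) : Prop :=
  hermitian d A /\ forall v : nat -> C, 0 <= Cre (qform d A v).
Definition posdef (d : nat) (A : Mat) : Prop :=
  hermitian d A /\
  forall v : nat -> C, (exists i, (i < d)%nat /\ v i <> C0) -> 0 < Cre (qform d A v).

Definition conjm (d : nat) (U A : Mat) : Mat := mmul d (mmul d U A) (adj U).

Definition log2 (x : R) : R := ln x / ln 2.
Definition is_log (d : nat) (P L : Mat) : Prop :=
  exists (U : Mat) (lam : nat -> R),
    unitary d U /\ (forall i, (i < d)%nat -> 0 < lam i) /\
    meq d P (conjm d U (diagm lam)) /\
    meq d L (conjm d U (diagm (fun i => log2 (lam i)))).
Definition mlog (d : nat) (P : Mat) : Mat :=
  epsilon (inhabits idm) (is_log d P).

(* relative entropy S(P||Q) = Tr(P log P) - Tr(P log Q) (real for P,Q > 0) *)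
Definition relent (d : nat) (P Q : Mat) : R :=
  Cre (mtr d (mmul d P (mlog d P))) - Cre (mtr d (mmul d P (mlog d Q))).

(* a map on operators: only depends on the entries of its argument *)
Definition well_defined_map (d : nat) (Phi : Mat -> Mat) : Prop :=
  forall A B, meq d A B -> meq d (Phi A) (Phi B).
Definition linear_map (d : nat) (Phi : Mat -> Mat) : Prop :=
  (forall A B, meq d (Phi (madd A B)) (madd (Phi A) (Phi B))) /\
  (forall (c : C) A, meq d (Phi (mscale c A)) (mscale c (Phi A))).
(* (id_k ⊗ Phi) acting on (k d) x (k d) block matrices; index p = a*d + i *)
Definition ampl (d : nat) (Phi : Mat -> Mat) (M : Mat) : Mat :=
  fun p q =>
    Phi (fun i j => M (Nat.div p d * d + i)%nat (Nat.div q d * d + j)%nat)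
        (Nat.modulo p d) (Nat.modulo q d).
Definition completely_positive (d : nat) (Phi : Mat -> Mat) : Prop :=
  forall (k : nat) (M : Mat), psd (k * d) M -> psd (k * d) (ampl d Phi M).
Definition trace_preserving (d : nat) (Phi : Mat -> Mat) : Prop :=
  forall A, mtr d (Phi A) = mtr d A.
Definition unital (d : nat) (Phi : Mat -> Mat) : Prop := meq d (Phi idm) idm.
Definition bistochastic (d : nat) (Phi : Mat -> Mat) : Prop :=
  well_defined_map d Phi /\ linear_map d Phi /\ completely_positive d Phi /\
  trace_preserving d Phi /\ unital d Phi.

Definition eigs_decreasing (d : nat) (A : Mat) (lam : nat -> R) : Prop :=
  (exists U, unitary d U /\ meq d A (conjm d U (diagm lam))) /\
  (forall i j, (i <= j)%nat -> (j < d)%nat -> lam j <= lam i).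

From Pilot Require Import Defs.
From Stdlib Require Import Reals Lra Lia ClassicalEpsilon.
From mathcomp Require Import all_boot all_order all_algebra.
From mathcomp Require Import Rstruct.
From mathcomp.real_closed Require Import complex.
From mathcomp Require Import ring zify.
Import Order.TTheory GRing.Theory Num.Theory Num.Def.

(* Write rho = V diag(a) V^* and sigma = Vs diag(b) Vs^* with a, b
   nonincreasing, and S(Phi(rho) || sigma) = Tr(X log X) - Tr(X log sigma)
   for X = Phi(rho).  Reading the diagonal of X in any orthonormal basis W
   gives D a, where D_ij = <w_i, Phi(v_j v_j^* ) w_i> is doubly stochastic
   because Phi is positive, unital and trace preserving (the mixing matrix).
   - In an eigenbasis of X this shows the eigenvalues of X are D a, so by
     Jensen's inequality for t log t, Tr(X log X) <= sum_j a_j log a_j.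
   - In the eigenbasis of sigma, Tr(X log sigma) = sum_k (D a)_k log b_k,
     which by Abel summation is at least the anti-sorted pairing
     sum_j a_j log b_(d-1-j).
   Equality is reached by the unitary conjugation sending v_j to the
   eigenvector of sigma for b_(d-1-j), and unitary conjugations are
   bi-stochastic. *)

Set Implicit Arguments.
Unset Strict Implicit.
Unset Printing Implicit Defensive.
Local Open Scope ring_scope.
Local Open Scope sesquilinear_scope.

Notation CR := (complex R).
Local Notation "x %:C" := (@Complex R x 0) (format "x %:C") : ring_scope.

Definition c2z (z : Defs.C) : CR := Complex z.1 z.2.
Definition z2c (z : CR) : Defs.C := (complex.Re z, complex.Im z).

Lemma c2zK : cancel c2z z2c. Proof. by case. Qed.
Lemma z2cK : cancel z2c c2z. Proof. by case. Qed.
Lemma c2z_inj : injective c2z. Proof. exact: can_inj c2zK. Qed.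
Lemma c2z_add z w : c2z (Cadd z w) = c2z z + c2z w. Proof. by case: z; case: w. Qed.
Lemma c2z_mul z w : c2z (Cmul z w) = c2z z * c2z w. Proof. by case: z; case: w. Qed.
Lemma c2z_conj z : c2z (Cconj z) = (c2z z)^*. Proof. by case: z. Qed.
Lemma Cre_c2z z : Cre z = complex.Re (c2z z). Proof. by []. Qed.

Lemma csumE n f : c2z (csum n f) = \sum_(i < n) c2z (f i).
Proof.
elim: n => [|n IH]; first by rewrite big_ord0.
by rewrite big_ord_recr /= c2z_add IH.
Qed.

Lemma rsumE n f : rsum n f = \sum_(i < n) f i.
Proof.
elim: n => [|n IH]; first by rewrite big_ord0.
by rewrite big_ord_recr /= IH.
Qed.

Lemma cRe_add (x y : CR) : complex.Re (x + y) = complex.Re x + complex.Re y.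
Proof. by case: x; case: y. Qed.

Lemma cRe_mulr (x : CR) (r : R) : complex.Re (x * r%:C) = complex.Re x * r.
Proof. by case: x => a b /=; rewrite mulr0 subr0. Qed.

Lemma cRe_mull (r : R) (z : CR) : complex.Re (r%:C * z) = r * complex.Re z.
Proof. by case: z => x y /=; rewrite mul0r subr0. Qed.

Lemma cRe_sum n (G : 'I_n -> CR) :
  complex.Re (\sum_(i < n) G i) = \sum_(i < n) complex.Re (G i).
Proof.
elim: n G => [|n IH] G; first by rewrite !big_ord0.
by rewrite !big_ord_recr /= cRe_add IH.
Qed.

Definition mx_of d (A : Mat) : 'M[CR]_d := \matrix_(i < d, j < d) c2z (A i j).
Definition cv_of d (v : nat -> Defs.C) : 'cV[CR]_d := \col_(i < d) c2z (v i).

Definition Mat_of d (M : 'M[CR]_d) : Mat := fun i j =>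
  match (insub i : option 'I_d), (insub j : option 'I_d) with
  | Some i', Some j' => z2c (M i' j') | _, _ => C0 end.
Definition vec_of d (w : 'cV[CR]_d) : nat -> Defs.C := fun i =>
  match (insub i : option 'I_d) with Some i' => z2c (w i' 0) | None => C0 end.

Lemma Mat_ofK d : cancel (@Mat_of d) (mx_of d).
Proof. by move=> M; apply/matrixP=> i j; rewrite !mxE /Mat_of !valK z2cK. Qed.

Lemma vec_ofK d : cancel (@vec_of d) (cv_of d).
Proof. by move=> w; apply/matrixP=> i j; rewrite !mxE /vec_of valK z2cK ord1. Qed.

Lemma adjmxM m n p (A : 'M[CR]_(m, n)) (B : 'M[CR]_(n, p)) :
  (A *m B)^t* = B^t* *m A^t*.
Proof. by rewrite trmx_mul map_mxM. Qed.

Lemma mx_of_mmul d A B : mx_of d (mmul d A B) = mx_of d A *m mx_of d B.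
Proof.
apply/matrixP=> i j; rewrite !mxE /mmul csumE; apply: eq_bigr => k _.
by rewrite c2z_mul !mxE.
Qed.

Lemma mx_of_adj d A : mx_of d (adj A) = (mx_of d A)^t*.
Proof. by apply/matrixP=> i j; rewrite !mxE /adj c2z_conj. Qed.

Lemma mx_of_madd d A B : mx_of d (madd A B) = mx_of d A + mx_of d B.
Proof. by apply/matrixP=> i j; rewrite !mxE /madd c2z_add. Qed.

Lemma mx_of_mscale d c A : mx_of d (mscale c A) = c2z c *: mx_of d A.
Proof. by apply/matrixP=> i j; rewrite !mxE /mscale c2z_mul. Qed.

Lemma eqb_ord d (i j : 'I_d) : Nat.eqb i j = (i == j).
Proof. by apply/idP/eqP => [/Nat.eqb_eq/val_inj | ->]; rewrite ?Nat.eqb_refl. Qed.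

Lemma mx_of_idm d : mx_of d idm = 1%:M.
Proof. by apply/matrixP=> i j; rewrite !mxE /idm eqb_ord; case: eqP. Qed.

Definition dg d (x : nat -> R) : 'M[CR]_d := diag_mx (\row_(i < d) (x i)%:C).

Lemma mx_of_diagm d l : mx_of d (diagm l) = dg d l.
Proof. by apply/matrixP=> i j; rewrite !mxE /diagm eqb_ord; case: eqP. Qed.

Lemma mx_of_conjm d U A :
  mx_of d (conjm d U A) = mx_of d U *m mx_of d A *m (mx_of d U)^t*.
Proof. by rewrite /conjm !mx_of_mmul mx_of_adj. Qed.

Lemma mtrE d A : c2z (mtr d A) = \tr (mx_of d A).
Proof. by rewrite /mtr csumE /mxtrace; apply: eq_bigr => i _; rewrite mxE. Qed.

Lemma Cre_tr d A B :
  Cre (mtr d (mmul d A B)) = complex.Re (\tr (mx_of d A *m mx_of d B)).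
Proof. by rewrite Cre_c2z mtrE mx_of_mmul. Qed.

Lemma meq_mx_of d A B : meq d A B <-> mx_of d A = mx_of d B.
Proof.
split=> [h|h i j hi hj].
  apply/matrixP=> i j; rewrite !mxE; congr c2z; apply: h; apply/ssrnat.ltP; exact: ltn_ord.
have /matrixP/(_ (Ordinal (introT ssrnat.ltP hi)) (Ordinal (introT ssrnat.ltP hj))) := h.
by rewrite !mxE => /c2z_inj.
Qed.

(* For square matrices a one-sided inverse is two-sided. *)
Lemma unitary_adjmx d (W : 'M[CR]_d) : W \is unitarymx -> W^t* *m W = 1%:M.
Proof. by move/unitarymxP/mulmx1C. Qed.

Lemma unitary_mx_of d U : unitary d U <-> mx_of d U \is unitarymx.
Proof.
rewrite /unitary !meq_mx_of !mx_of_mmul mx_of_adj mx_of_idm.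
split=> [[_ /unitarymxP //] | hU]; split; last exact/unitarymxP.
exact: unitary_adjmx.
Qed.

Definition bf d (B : Mat) (v w : nat -> Defs.C) : Defs.C :=
  csum d (fun i => Cmul (Cconj (v i)) (csum d (fun j => Cmul (B i j) (w j)))).

Lemma bfE d B v w : c2z (bf d B v w) = ((cv_of d v)^t* *m mx_of d B *m cv_of d w) 0 0.
Proof.
rewrite /bf csumE -mulmxA !mxE; apply: eq_bigr => i _.
rewrite c2z_mul c2z_conj csumE !mxE; congr (_ * _); apply: eq_bigr => j _.
by rewrite !mxE c2z_mul.
Qed.

Definition psdmx d (M : 'M[CR]_d) := M^t* = M /\
  forall w : 'cV[CR]_d, 0 <= complex.Re ((w^t* *m M *m w) 0 0).

Lemma psd_mx_of d A : psd d A <-> psdmx (mx_of d A).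
Proof.
rewrite /psd /psdmx /Defs.hermitian meq_mx_of mx_of_adj.
split=> [[h1 h2]|[h1 h2]]; split=> // w.
  by move/RleP: (h2 (vec_of w)); rewrite Cre_c2z bfE vec_ofK.
by apply/RleP; rewrite Cre_c2z bfE.
Qed.

Lemma posdef_pos d A (w : 'cV[CR]_d) : posdef d A -> w != 0 ->
  0 < complex.Re ((w^t* *m mx_of d A *m w) 0 0).
Proof.
move=> [_ h] wn0.
have [i Hi] : exists i, w i 0 != 0.
  apply/existsP; apply: contraNT wn0 => /existsPn H.
  by apply/eqP/matrixP=> i j; rewrite ord1 mxE; move: (H i); rewrite negbK => /eqP.
apply/RltP; have := h (vec_of w); rewrite Cre_c2z bfE vec_ofK; apply.
exists i; split; first by apply/ssrnat.ltP.
rewrite /vec_of valK => /(congr1 c2z); rewrite z2cK => E.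
by move: Hi; rewrite E eqxx.
Qed.

Lemma diag_quadform d (W M : 'M[CR]_d) (i : 'I_d) :
  (W^t* *m M *m W) i i = ((col i W)^t* *m M *m col i W) 0 0.
Proof.
rewrite !mxE; apply: eq_bigr => l _; rewrite !mxE; congr (_ * _).
by apply: eq_bigr => m _; rewrite !mxE.
Qed.

(* Columns of a unitary matrix have norm one, so they are nonzero. *)
Lemma unitary_col_neq0 d (W : 'M[CR]_d) (i : 'I_d) : W \is unitarymx -> col i W != 0.
Proof.
move=> /unitary_adjmx WW; apply: contra_neq (oner_neq0 CR) => col0.
have : (W^t* *m 1%:M *m W) i i = 1 by rewrite mulmx1 WW mxE eqxx.
by rewrite diag_quadform col0 mulmx0 mxE => <-.
Qed.

Lemma diag_conj d (W : 'M[CR]_d) (x : nat -> R) (i : 'I_d) : W \is unitarymx ->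
  complex.Re ((W^t* *m (W *m dg d x *m W^t*) *m W) i i) = x i.
Proof.
move=> /unitary_adjmx WW; rewrite !mulmxA WW mul1mx -mulmxA WW mulmx1.
by rewrite !mxE eqxx mulr1n.
Qed.

Lemma adjmx_dg d (x : nat -> R) : (dg d x)^t* = dg d x.
Proof.
apply/matrixP=> i j; rewrite !mxE; case: (eqVneq i j) => [->|_].
  rewrite !mulr1n; change (Complex (x j) (- 0) = Complex (x j) 0).
  by rewrite oppr0.
by rewrite !mulr0n conjC0.
Qed.

Lemma hermitian_spectral d (M : 'M[CR]_d) : M^t* = M ->
  exists W x, W \is unitarymx /\ M = W *m dg d x *m W^t*.
Proof.
move=> hM.
have Mh : M \is hermsymmx.
  by apply/is_hermitianmxP; rewrite expr0 scale1r; exact: (esym hM).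
have Preal := hermitian_spectral_diag_real Mh.
have /orthomx_spectralP EM := hermitian_normalmx Mh.
set P := spectralmx M in EM Preal *; set sp := spectral_diag M in EM Preal *.
have Pu : P \is unitarymx by apply: spectral_unitarymx.
pose x k := if (insub k : option 'I_d) is Some i then complex.Re (sp 0 i) else 0.
exists (P^t*), x; split; first by rewrite trmxC_unitary.
rewrite trmxCK {1}EM invmx_unitary //; congr (_ *m _ *m _).
apply/matrixP=> i j; rewrite !mxE /x valK.
have /mxOverP/(_ 0 i)/RRe_real E := Preal.
by congr (_ *+ _); exact: (esym E).
Qed.

(* A matrix intertwining two real diagonal matrices also intertwines their
   images under any function f, since T_ij <> 0 forces x_j = y_i. *)
Lemma comm_diag d (T : 'M[CR]_d) (x y : nat -> R) (f : R -> R) :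
  T *m dg d x = dg d y *m T ->
  T *m dg d (fun i => f (x i)) = dg d (fun i => f (y i)) *m T.
Proof.
move=> ET; apply/matrixP=> i j; rewrite /dg mul_mx_diag mul_diag_mx !mxE.
have /matrixP/(_ i j) := ET; rewrite /dg mul_mx_diag mul_diag_mx !mxE.
have [-> _|Tn0 Eij] := eqVneq (T i j) 0; first by rewrite mul0r mulr0.
have [->] : (x j)%:C = (y i)%:C by apply: (mulfI Tn0); rewrite Eij mulrC.
by rewrite mulrC.
Qed.

Lemma functional_calculus_uniq d (W V : 'M[CR]_d) (x y : nat -> R) (f : R -> R) :
  W \is unitarymx -> V \is unitarymx ->
  W *m dg d x *m W^t* = V *m dg d y *m V^t* ->
  W *m dg d (fun i => f (x i)) *m W^t* = V *m dg d (fun i => f (y i)) *m V^t*.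
Proof.
move=> Wu Vu E.
have W1 := unitary_adjmx Wu; have V1 := unitary_adjmx Vu.
have ET : (V^t* *m W) *m dg d x = dg d y *m (V^t* *m W).
  move: (congr1 (fun Z => V^t* *m Z *m W) E) => /=.
  rewrite !mulmxA V1 mul1mx -[_ *m W^t* *m W]mulmxA W1 mulmx1 => ->.
  by rewrite ?mulmxA.
transitivity (V *m (V^t* *m W *m dg d (fun i => f (x i))) *m W^t*).
  by rewrite !mulmxA (unitarymxP Vu) mul1mx.
rewrite (comm_diag f ET) -!mulmxA; congr (_ *m (_ *m _)).
by rewrite (unitarymxP Wu) mulmx1.
Qed.

Lemma mx_of_mlog d A U (x : nat -> R) : unitary d U ->
  (forall i, (i < d)%N -> 0 < x i) ->
  mx_of d A = mx_of d U *m dg d x *m (mx_of d U)^t* ->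
  mx_of d (mlog d A) = mx_of d U *m dg d (fun i => log2 (x i)) *m (mx_of d U)^t*.
Proof.
move=> hU hx EA.
have ex : exists L, is_log d A L.
  exists (conjm d U (diagm (fun i => log2 (x i)))), U, x; split=> //; split.
    by move=> i /ssrnat.ltP hi; apply/RltP; apply: hx.
  by split; apply/meq_mx_of; rewrite mx_of_conjm mx_of_diagm.
have [U' [x' [hU' [_ [hA' hL']]]]] := epsilon_spec (inhabits idm) (is_log d A) ex.
move/meq_mx_of: hL' => ->; rewrite mx_of_conjm mx_of_diagm.
apply: functional_calculus_uniq; try exact/unitary_mx_of.
by move/meq_mx_of: hA'; rewrite mx_of_conjm mx_of_diagm -EA.
Qed.

Lemma tr_mul_spectral d (Z W : 'M[CR]_d) (y : nat -> R) :
  complex.Re (\tr (Z *m (W *m dg d y *m W^t*))) =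
  \sum_(i < d) complex.Re ((W^t* *m Z *m W) i i) * y i.
Proof.
rewrite !mulmxA mxtrace_mulC !mulmxA /dg mul_mx_diag /mxtrace cRe_sum.
by apply: eq_bigr => i _; rewrite !mxE cRe_mulr.
Qed.

Lemma entropy_spectral d A U (x : nat -> R) : unitary d U ->
  (forall i, (i < d)%N -> 0 < x i) ->
  mx_of d A = mx_of d U *m dg d x *m (mx_of d U)^t* ->
  Cre (mtr d (mmul d A (mlog d A))) = \sum_(i < d) x i * log2 (x i).
Proof.
move=> hU hx EA; rewrite Cre_tr (mx_of_mlog hU hx EA) tr_mul_spectral.
by apply: eq_bigr => i _; rewrite EA diag_conj //; exact/unitary_mx_of.
Qed.

Definition doubly_stochastic n (D : nat -> nat -> R) : Prop :=
  [/\ forall i j, (i < n)%N -> (j < n)%N -> 0 <= D i j,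
      forall i, (i < n)%N -> \sum_(j < n) D i j = 1 &
      forall j, (j < n)%N -> \sum_(i < n) D i j = 1].

Definition nonincreasing n (a : nat -> R) : Prop :=
  forall i j, (i <= j)%N -> (j < n)%N -> a j <= a i.

Lemma doubly_stochastic_mix_pos n D a : doubly_stochastic n D ->
  (forall j, (j < n)%N -> 0 < a j) ->
  forall i, (i < n)%N -> 0 < \sum_(j < n) D i j * a j.
Proof.
move=> [D0 Dr _] apos i hi.
have terms_ge0 : forall j : 'I_n, true -> 0 <= D i j * a j.
  by move=> j _; rewrite mulr_ge0 // ?D0 // ltW // apos.
rewrite lt_def sumr_ge0 // andbT; apply/eqP => /(psumr_eq0P terms_ge0) zero.
have := Dr i hi; rewrite big1 => [/eqP|j _]; first by rewrite eq_sym oner_eq0.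
by have /eqP := zero j isT; rewrite mulf_eq0 (gt_eqF (apos _ (ltn_ord j))) orbF => /eqP.
Qed.

(* The tangent line of the convex function t ln t lies below its graph;
   this is 1 + ln s <= s for s = x / y, stated in the reals of the
   standard library where [ln] lives. *)
Local Close Scope ring_scope.
Lemma xlnx_tangent_R (x y : R) : 0 < x -> 0 < y ->
  x * ln x + (ln x + 1) * (y - x) <= y * ln y.
Proof.
intros hx hy.
have h := exp_ineq1_le (ln (x / y)).
rewrite exp_ln in h; last by apply: Rdiv_lt_0_compat.
rewrite /Rdiv ln_mult in h; [|Lra.lra|by apply: Rinv_0_lt_compat].
rewrite ln_Rinv in h; last by [].
have h2 : y * (1 + (ln x + - ln y)) <= y * (x * / y).
  by apply: Rmult_le_compat_l; Lra.lra.
rewrite (Rmult_comm x) -Rmult_assoc Rinv_r ?Rmult_1_l in h2; last by Lra.lra.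
Lra.lra.
Qed.
Local Open Scope ring_scope.

Lemma xlnx_tangent (x y : R) : 0 < x -> 0 < y ->
  x * ln x + (ln x + 1) * (y - x) <= y * ln y.
Proof. by move=> /RltP hx /RltP hy; apply/RleP; apply: xlnx_tangent_R. Qed.

Lemma doubly_stochastic_xlnx n D a : doubly_stochastic n D ->
  (forall j, (j < n)%N -> 0 < a j) ->
  \sum_(i < n) (\sum_(j < n) D i j * a j) * ln (\sum_(j < n) D i j * a j)
  <= \sum_(j < n) a j * ln (a j).
Proof.
move=> hD apos; have [D0 Dr Dc] := hD.
set x := fun i => \sum_(j < n) D i j * a j.
have -> : \sum_(j < n) a j * ln (a j) = \sum_(i < n) \sum_(j < n) D i j * (a j * ln (a j)).
  rewrite exchange_big /=; apply: eq_bigr => j _.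
  by rewrite -mulr_suml Dc // mul1r.
apply: ler_sum => i _.
have tangent_avg : \sum_(j < n) D i j * (x i * ln (x i) + (ln (x i) + 1) * (a j - x i))
    = x i * ln (x i).
  rewrite (eq_bigr (fun j : 'I_n => D i j * (x i * ln (x i))
     + (ln (x i) + 1) * (D i j * a j) - (ln (x i) + 1) * x i * D i j)); last by move=> j _; ring.
  rewrite sumrB big_split /= -mulr_suml -!mulr_sumr Dr // -/(x i); ring.
rewrite -tangent_avg; apply: ler_sum => j _; apply: ler_wpM2l; first exact: D0.
exact: xlnx_tangent (doubly_stochastic_mix_pos hD apos (ltn_ord i)) (apos _ (ltn_ord j)).
Qed.

Lemma abel_summation (c e : nat -> R) t :
  \sum_(k < t) c k * e k =
  c t * \sum_(k < t) e k + \sum_(k < t) (c k - c k.+1) * \sum_(l < k.+1) e l.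
Proof.
elim: t => [|t IH]; first by rewrite !big_ord0 mulr0 addr0.
rewrite !big_ord_recr /= IH; ring.
Qed.

Lemma abel_nonneg n (c e : nat -> R) : nonincreasing n c ->
  (forall t, (t <= n)%N -> 0 <= \sum_(k < t) e k) ->
  \sum_(k < n) e k = 0 ->
  0 <= \sum_(k < n) c k * e k.
Proof.
move=> cdec hpart htot.
rewrite abel_summation htot mulr0 add0r; apply: sumr_ge0 => k _.
have [hk|hk] := ltnP k.+1 n.
  by rewrite mulr_ge0 ?hpart 1?ltnW // subr_ge0 cdec.
have -> : k.+1 = n by have := ltn_ord k; lia.
by rewrite htot mulr0.
Qed.

Lemma bottom_indicator_min n (u a : nat -> R) m :
  (forall j, (j < n)%N -> 0 <= u j <= 1) -> nonincreasing n a ->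
  \sum_(j < n) u j = \sum_(j < n) ((m <= j)%N)%:R ->
  \sum_(j < n) ((m <= j)%N)%:R * a j <= \sum_(j < n) u j * a j.
Proof.
move=> u01 adec hsum; set th := a (minn m n.-1).
rewrite -subr_ge0.
have -> : \sum_(j < n) u j * a j - \sum_(j < n) ((m <= j)%N)%:R * a j =
    \sum_(j < n) (u j - ((m <= j)%N)%:R) * (a j - th).
  rewrite [RHS](eq_bigr (fun j : 'I_n => (u j * a j - ((m <= j)%N)%:R * a j)
    - th * (u j - ((m <= j)%N)%:R))) => [|j _]; last by ring.
  by rewrite sumrB sumrB -mulr_sumr sumrB hsum subrr mulr0 subr0.
apply: sumr_ge0 => j _; have /andP[u0 u1] := u01 j (ltn_ord j).
have hj := ltn_ord j.
case: (leqP m j) => h.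
  by apply: mulr_le0; rewrite subr_le0 // adec //; lia.
by apply: mulr_ge0; rewrite subr_ge0 // adec //; lia.
Qed.

Lemma sum_indicator_ge n m : \sum_(j < n) ((m <= j)%N)%:R = ((n - m)%N)%:R :> R.
Proof.
elim: n => [|n IH]; first by rewrite big_ord0 sub0n.
rewrite big_ord_recr /= IH; case: (leqP m n) => h.
  by rewrite subSn // -natrD addn1.
have -> : (n.+1 - m = 0)%N by lia.
have -> : (n - m = 0)%N by lia.
by rewrite addr0.
Qed.

Lemma sum_last_terms n t (f : nat -> R) : (t <= n)%N ->
  \sum_(k < t) f (n - 1 - k)%N = \sum_(j < n) ((n - t <= j)%N)%:R * f j.
Proof.
elim: t => [|t IH] ht.
  by rewrite big_ord0 big1 // => j _; rewrite subn0 leqNgt ltn_ord mul0r.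
rewrite big_ord_recr /= IH; last by lia.
have hp : (n - t.+1 < n)%N by lia.
rewrite [RHS](bigD1 (Ordinal hp)) //= leqnn mul1r addrC; congr (f _ + _); first by lia.
rewrite [RHS]big_mkcond; apply: eq_bigr => j _.
case: (eqVneq j (Ordinal hp)) => [->|hj] /=.
  have -> : (n - t <= n - t.+1)%N = false by apply/negbTE; rewrite -ltnNge; lia.
  by rewrite mul0r.
congr ((nat_of_bool _)%:R * _); apply/idP/idP => H; first by lia.
have : (n - t.+1)%N != j by apply: contra hj => /eqP e; apply/eqP/val_inj.
lia.
Qed.

Lemma sum_prefix_le n t (F : nat -> R) : (t <= n)%N ->
  (forall k, (k < n)%N -> 0 <= F k) -> \sum_(k < t) F k <= \sum_(k < n) F k.
Proof.
move=> htn F0; rewrite (big_ord_widen _ _ htn) big_mkcond /=.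
by apply: ler_sum => k _; case: ifP => _ //; exact: F0.
Qed.

Lemma doubly_stochastic_rearrangement n E (a c : nat -> R) :
  doubly_stochastic n E -> nonincreasing n a -> nonincreasing n c ->
  \sum_(j < n) a j * c (n - 1 - j)%N <= \sum_(k < n) (\sum_(j < n) E k j * a j) * c k.
Proof.
move=> [E0 Er Ec] adec cdec.
have -> : \sum_(j < n) a j * c (n - 1 - j)%N = \sum_(k < n) a (n - 1 - k)%N * c k.
  rewrite (reindex_inj rev_ord_inj) /=; apply: eq_bigr => k _.
  have hk := ltn_ord k.
  have -> : (n - k.+1 = n - 1 - k)%N by lia.
  by have -> : (n - 1 - (n - 1 - k) = k)%N by lia.
set y := fun k => \sum_(j < n) E k j * a j.
have partial : forall t, \sum_(k < t) y k = \sum_(j < n) (\sum_(k < t) E k j) * a j.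
  by move=> t; rewrite /y exchange_big /=; apply: eq_bigr => j _; rewrite mulr_suml.
have majorized : forall t, (t <= n)%N -> \sum_(k < t) a (n - 1 - k)%N <= \sum_(k < t) y k.
  move=> t ht; rewrite sum_last_terms // partial.
  apply: (bottom_indicator_min (u := fun j => \sum_(k < t) E k j)) => //.
  - move=> j hj; apply/andP; split.
      by apply: sumr_ge0 => k _; apply: E0 => //; exact: leq_trans (ltn_ord k) ht.
    rewrite -(Ec j hj); apply: (sum_prefix_le (F := fun k => E k j)) => // k hk.
    exact: E0.
  - rewrite sum_indicator_ge exchange_big /= (eq_bigr (fun _ => 1)) => [|k _]; last first.
      by rewrite Er //; exact: leq_trans (ltn_ord k) ht.
    by rewrite sumr_const card_ord; congr (_%:R); lia.
have total : \sum_(k < n) (y k - a (n - 1 - k)%N) = 0.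
  rewrite sumrB partial sum_last_terms // subnn.
  under eq_bigr => j _ do rewrite Ec // mul1r.
  by under [X in _ - X]eq_bigr => j _ do rewrite leq0n mul1r; rewrite subrr.
rewrite -subr_ge0 -sumrB.
under eq_bigr => k _ do rewrite -mulrBl mulrC.
apply: (abel_nonneg (e := fun k => y k - a (n - 1 - k)%N)) => // t ht.
by rewrite sumrB subr_ge0 majorized.
Qed.

Lemma ln2_gt0 : 0 < ln 2.
Proof.
apply/RltP; apply: (Rlt_trans _ (/2)); last exact: ln_lt_2.
by apply: Rinv_0_lt_compat; exact: Rlt_0_2.
Qed.

Lemma log2_le x y : 0 < x -> x <= y -> log2 x <= log2 y.
Proof.
move=> hx hxy; rewrite /log2 ler_pM2r ?invr_gt0 ?ln2_gt0 //.
have [->//|ne] := eqVneq x y.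
apply/ltW/RltP/ln_increasing; apply/RltP => //.
by rewrite lt_neqAle ne hxy.
Qed.

Lemma sum_mul_log2 n (F G : nat -> R) :
  \sum_(i < n) F i * log2 (G i) = (\sum_(i < n) F i * ln (G i)) / ln 2.
Proof. by rewrite mulr_suml; apply: eq_bigr => i _; rewrite mulrA. Qed.

Definition colproj d (W : 'M[CR]_d) (j : 'I_d) : 'M[CR]_d := col j W *m (col j W)^t*.

Lemma spectral_colproj d (W : 'M[CR]_d) (x : nat -> R) :
  W *m dg d x *m W^t* = \sum_(j < d) (x j)%:C *: colproj W j.
Proof.
apply/matrixP=> i k; rewrite /dg mul_mx_diag summxE !mxE.
by apply: eq_bigr => j _; rewrite !mxE big_ord1 !mxE; ring.
Qed.

Lemma colproj_psd d (W : 'M[CR]_d) j : psdmx (colproj W j).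
Proof.
split; first by rewrite /colproj adjmxM trmxCK.
move=> w; set z := w^t* *m col j W.
have -> : w^t* *m colproj W j *m w = z *m z^t* by rewrite /z adjmxM trmxCK !mulmxA.
have := mulcJ_ge0 (z 0 0); rewrite lecE => /andP[_ h].
rewrite mxE big_ord1; have -> : z^t* 0 0 = (z 0 0)^* by rewrite !mxE.
exact: h.
Qed.

Lemma colproj_tr d (W : 'M[CR]_d) j : W \is unitarymx -> \tr (colproj W j) = 1.
Proof.
move=> /unitary_adjmx WW; rewrite /colproj mxtrace_mulC /mxtrace big_ord1.
transitivity ((W^t* *m W) j j); last by rewrite WW mxE eqxx.
by rewrite !mxE; apply: eq_bigr => l _; rewrite !mxE.
Qed.

Lemma sum_colproj d (W : 'M[CR]_d) : W \is unitarymx -> \sum_(j < d) colproj W j = 1%:M.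
Proof.
move=> /unitarymxP WW; rewrite -WW -[W in W *m _]mulmx1.
have -> : (1%:M : 'M[CR]_d) = dg d (fun _ => 1) by apply/matrixP=> i j; rewrite !mxE.
by rewrite spectral_colproj; apply: eq_bigr => j _; rewrite scale1r.
Qed.

Lemma psd_diag_ge0 d (W M : 'M[CR]_d) (i : 'I_d) : psdmx M ->
  0 <= complex.Re ((W^t* *m M *m W) i i).
Proof.
by move=> [_ hM]; rewrite diag_quadform hM.
Qed.

Lemma psd_spectral d (W : 'M[CR]_d) (a : nat -> R) :
  (forall j, (j < d)%N -> 0 < a j) -> psdmx (W *m dg d a *m W^t*).
Proof.
move=> apos; split; first by rewrite !adjmxM trmxCK mulmxA adjmx_dg.
move=> w; rewrite spectral_colproj mulmx_sumr mulmx_suml summxE cRe_sum.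
apply: sumr_ge0 => j _; rewrite -scalemxAr -scalemxAl mxE cRe_mull.
apply: mulr_ge0; first exact/ltW/apos.
by case: (colproj_psd W j) => _ /(_ w).
Qed.

(* A linear, positive, unital and trace-preserving map Psi: for an input
   V diag(a) V^* and an orthonormal basis W of the output, the diagonal of
   the output in the basis W is obtained from a by a doubly stochastic
   matrix, the mixing matrix of Psi. *)
Section MixingMatrix.
Variable d : nat.
Variable Psi : 'M[CR]_d -> 'M[CR]_d.
Hypothesis PsiD : forall M N, Psi (M + N) = Psi M + Psi N.
Hypothesis PsiZ : forall c M, Psi (c *: M) = c *: Psi M.
Hypothesis Psi1 : Psi 1%:M = 1%:M.
Hypothesis Psi_tr : forall M, \tr (Psi M) = \tr M.
Hypothesis Psi_psd : forall M, psdmx M -> psdmx (Psi M).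

Lemma Psi_sum (F : 'I_d -> 'M[CR]_d) : Psi (\sum_(j < d) F j) = \sum_(j < d) Psi (F j).
Proof.
apply: (big_ind2 (fun M N => Psi M = N)) => [|M1 N1 M2 N2 <- <-|//].
  by have := PsiZ 0 0; rewrite !scale0r.
by rewrite PsiD.
Qed.

(* mixing V W i j = <w_i, Psi(v_j v_j^* ) w_i>, as a real matrix indexed
   by naturals (zero outside the d x d range). *)
Definition mixing (V W : 'M[CR]_d) (i j : nat) : R :=
  match (insub i : option 'I_d), (insub j : option 'I_d) with
  | Some i', Some j' => complex.Re ((W^t* *m Psi (colproj V j') *m W) i' i')
  | _, _ => 0 end.

Lemma mixingE V W (i j : 'I_d) :
  mixing V W i j = complex.Re ((W^t* *m Psi (colproj V j) *m W) i i).
Proof. by rewrite /mixing !valK. Qed.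

(* Positivity gives nonnegative entries, unitality the row sums and
   trace preservation the column sums. *)
Lemma mixing_doubly_stochastic V W : V \is unitarymx -> W \is unitarymx ->
  doubly_stochastic d (mixing V W).
Proof.
move=> Vu Wu; split.
- move=> i j hi hj; rewrite (mixingE V W (Ordinal hi) (Ordinal hj)).
  exact/psd_diag_ge0/Psi_psd/colproj_psd.
- move=> i hi; under eq_bigr => j _ do rewrite (mixingE V W (Ordinal hi)).
  rewrite -cRe_sum -summxE.
  rewrite -mulmx_suml -mulmx_sumr -Psi_sum sum_colproj // Psi1 mulmx1.
  by rewrite unitary_adjmx // mxE eqxx.
- move=> j hj; under eq_bigr => i _ do rewrite (mixingE V W i (Ordinal hj)).
  rewrite -cRe_sum -/(mxtrace _) mxtrace_mulC mulmxA (unitarymxP Wu) mul1mx.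
  by rewrite Psi_tr colproj_tr.
Qed.

Lemma mixing_diag V W (a : nat -> R) (i : 'I_d) :
  complex.Re ((W^t* *m Psi (V *m dg d a *m V^t*) *m W) i i) =
  \sum_(j < d) mixing V W i j * a j.
Proof.
rewrite spectral_colproj Psi_sum.
under eq_bigr => j _ do rewrite PsiZ.
rewrite mulmx_sumr mulmx_suml summxE cRe_sum; apply: eq_bigr => j _.
by rewrite -scalemxAr -scalemxAl mxE cRe_mull mixingE mulrC.
Qed.

Variables (V : 'M[CR]_d) (a : nat -> R).
Hypothesis V_unitary : V \is unitarymx.
Hypothesis a_pos : forall j, (j < d)%N -> 0 < a j.

Lemma output_entropy_le : exists W x, W \is unitarymx /\
  Psi (V *m dg d a *m V^t*) = W *m dg d x *m W^t* /\
  (forall i, (i < d)%N -> 0 < x i) /\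
  \sum_(i < d) x i * log2 (x i) <= \sum_(j < d) a j * log2 (a j).
Proof.
have [W [x [Wu EY]]] := hermitian_spectral (proj1 (Psi_psd (psd_spectral V a_pos))).
have xE : forall i : 'I_d, x i = \sum_(j < d) mixing V W i j * a j.
  by move=> i; rewrite -mixing_diag EY diag_conj.
have hD := mixing_doubly_stochastic V_unitary Wu.
have xpos : forall i, (i < d)%N -> 0 < x i.
  by move=> i hi; rewrite (xE (Ordinal hi)); exact: doubly_stochastic_mix_pos hD a_pos i hi.
exists W, x; do !split => //.
rewrite !sum_mul_log2 ler_pM2r ?invr_gt0 ?ln2_gt0 //.
under eq_bigr => i _ do rewrite xE.
exact: doubly_stochastic_xlnx.
Qed.

Lemma output_cross_term_ge (Vs : 'M[CR]_d) (b : nat -> R) :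
  Vs \is unitarymx -> (forall j, (j < d)%N -> 0 < b j) ->
  nonincreasing d a -> nonincreasing d b ->
  \sum_(j < d) a j * log2 (b (d - 1 - j)%N) <=
  complex.Re (\tr (Psi (V *m dg d a *m V^t*) *m (Vs *m dg d (fun i => log2 (b i)) *m Vs^t*))).
Proof.
move=> Vs_unitary bpos adec bdec; rewrite tr_mul_spectral.
under [X in _ <= X]eq_bigr => k _ do rewrite mixing_diag.
apply: (doubly_stochastic_rearrangement (c := fun k => log2 (b k)))
  (mixing_doubly_stochastic V_unitary Vs_unitary) adec _.
by move=> i j hij hj; apply: log2_le; [apply: bpos; lia | apply: bdec].
Qed.

End MixingMatrix.

Lemma posdef_spectrum d A a : posdef d A -> eigs_decreasing d A a ->
  exists U, unitary d U /\ mx_of d A = mx_of d U *m dg d a *m (mx_of d U)^t* /\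
    (forall i, (i < d)%N -> 0 < a i) /\ nonincreasing d a.
Proof.
move=> hA [[U [hU /meq_mx_of]]]; rewrite mx_of_conjm mx_of_diagm => EA hdec.
have Uu := proj1 (unitary_mx_of d U) hU.
exists U; do !split => //.
  move=> i hi; have := posdef_pos hA (unitary_col_neq0 (Ordinal hi) Uu).
  by rewrite -diag_quadform EA diag_conj.
by move=> i j hij hj; apply/RleP; apply: hdec; [exact/ssrnat.leP | exact/ssrnat.ltP].
Qed.

Section BistochasticMatrixMap.
Variables (d : nat) (Phi : Mat -> Mat).
Hypothesis hPhi : bistochastic d Phi.

Definition mx_map (M : 'M[CR]_d) : 'M[CR]_d := mx_of d (Phi (Mat_of M)).

Lemma mx_of_map A : mx_of d (Phi A) = mx_map (mx_of d A).
Proof.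
case: hPhi => wd _; apply/meq_mx_of; apply: wd.
by apply/meq_mx_of; rewrite Mat_ofK.
Qed.

Lemma mx_mapD M N : mx_map (M + N) = mx_map M + mx_map N.
Proof.
case: hPhi => _ [[lD _] _].
by rewrite -[M]Mat_ofK -[N]Mat_ofK -mx_of_madd -!mx_of_map -mx_of_madd; apply/meq_mx_of/lD.
Qed.

Lemma mx_mapZ c M : mx_map (c *: M) = c *: mx_map M.
Proof.
case: hPhi => _ [[_ lZ] _].
by rewrite -[M]Mat_ofK -(z2cK c) -mx_of_mscale -!mx_of_map -mx_of_mscale; apply/meq_mx_of/lZ.
Qed.

Lemma mx_map1 : mx_map 1%:M = 1%:M.
Proof.
case: hPhi => _ [_ [_ [_ hu]]].
by rewrite -(mx_of_idm d) -mx_of_map; apply/meq_mx_of.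
Qed.

Lemma mx_map_tr M : \tr (mx_map M) = \tr M.
Proof. by case: hPhi => _ [_ [_ [htp _]]]; rewrite /mx_map -mtrE htp mtrE Mat_ofK. Qed.

(* Complete positivity at level one is positivity. *)
Lemma mx_map_psd M : psdmx M -> psdmx (mx_map M).
Proof.
case: hPhi => _ [_ [hcp _]] hM.
have hA : psd d (Mat_of M) by apply/psd_mx_of; rewrite Mat_ofK.
have := hcp 1%N (Mat_of M); rewrite Nat.mul_1_l => /(_ hA)/psd_mx_of.
suff -> : mx_of d (ampl d Phi (Mat_of M)) = mx_map M by [].
apply/matrixP=> p q; rewrite !mxE /ampl.
by rewrite !Nat.div_small ?Nat.mod_small //; apply/ssrnat.ltP.
Qed.

End BistochasticMatrixMap.

Lemma bistochastic_relent_le d rho sigma a b Phi :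
  posdef d rho -> posdef d sigma -> eigs_decreasing d rho a -> eigs_decreasing d sigma b ->
  bistochastic d Phi ->
  relent d (Phi rho) sigma <=
  Cre (mtr d (mmul d rho (mlog d rho))) - rsum d (fun j => a j * log2 (b (d - 1 - j)%N)).
Proof.
move=> hr hs er es hPhi.
have [Ur [hUr [Erho [apos adec]]]] := posdef_spectrum hr er.
have [Us [hUs [Esig [bpos bdec]]]] := posdef_spectrum hs es.
have Vr := proj1 (unitary_mx_of d Ur) hUr.
have Vs := proj1 (unitary_mx_of d Us) hUs.
have [W [x [Wu [EY [xpos Hent]]]]] := output_entropy_le (mx_mapD hPhi) (mx_mapZ hPhi)
  (mx_map1 hPhi) (mx_map_tr hPhi) (mx_map_psd hPhi) Vr apos.
have Hcross := output_cross_term_ge (mx_mapD hPhi) (mx_mapZ hPhi)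
  (mx_map1 hPhi) (mx_map_tr hPhi) (mx_map_psd hPhi) Vr Vs bpos adec bdec.
rewrite -Erho -mx_of_map // in EY Hcross.
have hW : unitary d (Mat_of W) by apply/unitary_mx_of; rewrite Mat_ofK.
rewrite /relent (entropy_spectral hW xpos) ?Mat_ofK // (entropy_spectral hUr apos Erho).
rewrite Cre_tr (mx_of_mlog hUs bpos Esig) rsumE.
exact: lerB Hent Hcross.
Qed.

Definition blk d (A : Mat) (a b : nat) : Mat :=
  fun i j => A (Nat.add (Nat.mul a d) i) (Nat.add (Nat.mul b d) j).
Definition vblk d (v : nat -> Defs.C) (a : nat) : nat -> Defs.C :=
  fun i => v (Nat.add (Nat.mul a d) i).

Lemma sum_blocks (F : nat -> CR) k d :
  \sum_(p < Nat.mul k d) F p = \sum_(a < k) \sum_(s < d) F (Nat.add (Nat.mul a d) s).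
Proof.
elim: k => [|k IH]; first by rewrite !big_ord0.
have -> : Nat.mul k.+1 d = (Nat.mul k d + d)%N by rewrite /= addnC.
by rewrite big_split_ord /= IH big_ord_recr.
Qed.

Lemma idx_div d a s : (s < d)%coq_nat -> Nat.div (Nat.add (Nat.mul a d) s) d = a.
Proof. by move=> h; rewrite Nat.div_add_l ?Nat.div_small ?Nat.add_0_r //; lia. Qed.

Lemma idx_mod d a s : (s < d)%coq_nat -> Nat.modulo (Nat.add (Nat.mul a d) s) d = s.
Proof. by move=> h; rewrite Nat.add_comm Nat.Div0.mod_add Nat.mod_small. Qed.

Lemma bf_sum d B x y : c2z (bf d B x y) =
  \sum_(s < d) (c2z (x s))^* * \sum_(t < d) c2z (B s t) * c2z (y t).
Proof.
rewrite /bf csumE; apply: eq_bigr => s _; rewrite c2z_mul c2z_conj csumE.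
by congr (_ * _); apply: eq_bigr => t _; rewrite c2z_mul.
Qed.

Lemma qform_blocks k d A v : c2z (qform (Nat.mul k d) A v) =
  \sum_(a < k) \sum_(b < k) c2z (bf d (blk d A a b) (vblk d v a) (vblk d v b)).
Proof.
rewrite -/(bf (Nat.mul k d) A v v) bf_sum.
rewrite (sum_blocks (fun p => (c2z (v p))^* * \sum_(t < Nat.mul k d) c2z (A p t) * c2z (v t))).
apply: eq_bigr => a _.
under eq_bigr => s _ do rewrite (sum_blocks (fun t => c2z (A (Nat.add (Nat.mul a d) s) t) * c2z (v t))) big_distrr /=.
rewrite exchange_big /=; apply: eq_bigr => b _.
by rewrite bf_sum; apply: eq_bigr => s _; congr (_ * _).
Qed.

Lemma hermitian_blk k d M a b : Defs.hermitian (Nat.mul k d) M ->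
  (a < k)%coq_nat -> (b < k)%coq_nat -> meq d (adj (blk d M a b)) (blk d M b a).
Proof.
move=> hM ha hb i j hi hj; rewrite /adj /blk.
by rewrite -(hM (Nat.add (Nat.mul b d) i) (Nat.add (Nat.mul a d) j)); [|nia|nia].
Qed.

Lemma ampl_conjm_blk d U M a b :
  meq d (blk d (ampl d (conjm d U) M) a b) (conjm d U (blk d M a b)).
Proof. by move=> i j hi hj; rewrite /blk /ampl !idx_div // !idx_mod. Qed.

(* Conjugation by a unitary is completely positive: on each block of the
   amplified input it is again a conjugation, and the quadratic form of the
   output on v is that of the input on the blockwise rotated vector. *)
Lemma conjm_cp d U : unitary d U -> completely_positive d (conjm d U).
Proof.
move=> hU k M [hM hq]; set Ub := mx_of d U.
have [d0|dpos] := posnP d.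
  rewrite d0 Nat.mul_0_r; split=> [i j /ssrnat.ltP //|v].
  by rewrite /qform /=; apply: Rle_refl.
have hm p : (Nat.modulo p d < d)%coq_nat by apply: Nat.mod_upper_bound; lia.
have hdiv p : (p < Nat.mul k d)%coq_nat -> (Nat.div p d < k)%coq_nat.
  by move=> hp; apply: Nat.Div0.div_lt_upper_bound; lia.
split.
  move=> p q hp hq'; rewrite /adj /ampl.
  have herm : meq d (adj (conjm d U (blk d M (Nat.div q d) (Nat.div p d))))
                    (conjm d U (blk d M (Nat.div p d) (Nat.div q d))).
    apply/meq_mx_of; rewrite mx_of_adj !mx_of_conjm !adjmxM trmxCK !mulmxA.
    by rewrite -mx_of_adj; move/meq_mx_of: (hermitian_blk hM (hdiv q hq') (hdiv p hp)) => ->.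
  exact: (herm _ _ (hm p) (hm q)).
move=> v.
pose w : nat -> Defs.C := fun p =>
  vec_of (Ub^t* *m cv_of d (vblk d v (Nat.div p d))) (Nat.modulo p d).
have hw a : cv_of d (vblk d w a) = Ub^t* *m cv_of d (vblk d v a).
  rewrite -[RHS](vec_ofK (Ub^t* *m cv_of d (vblk d v a))).
  apply/matrixP=> i j; rewrite !mxE /vblk /w idx_div ?idx_mod //; exact/ssrnat.ltP.
have := hq w; rewrite !Cre_c2z !qform_blocks.
suff -> : \sum_(a < k) \sum_(b < k)
    c2z (bf d (blk d (ampl d (conjm d U) M) a b) (vblk d v a) (vblk d v b))
  = \sum_(a < k) \sum_(b < k) c2z (bf d (blk d M a b) (vblk d w a) (vblk d w b)) by [].
apply: eq_bigr => a _; apply: eq_bigr => b _.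
rewrite !bfE !hw; have /meq_mx_of -> := @ampl_conjm_blk d U M a b.
by rewrite mx_of_conjm !adjmxM trmxCK !mulmxA.
Qed.

Lemma conjm_bistochastic d U : unitary d U -> bistochastic d (conjm d U).
Proof.
move=> hU; have Uu := proj1 (unitary_mx_of d U) hU.
split; first by move=> A B /meq_mx_of e; apply/meq_mx_of; rewrite !mx_of_conjm e.
split.
  split=> [A B|c A]; apply/meq_mx_of; rewrite mx_of_conjm.
    by rewrite !mx_of_madd !mx_of_conjm mulmxDr mulmxDl.
  by rewrite !mx_of_mscale mx_of_conjm -scalemxAr -scalemxAl.
split; first exact: conjm_cp.
split.
  move=> A; apply: c2z_inj.
  by rewrite !mtrE mx_of_conjm mxtrace_mulC mulmxA unitary_adjmx // mul1mx.
by apply/meq_mx_of; rewrite mx_of_conjm mx_of_idm mulmx1 (unitarymxP Uu).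
Qed.

Definition revmx d : 'M[CR]_d := \matrix_(i < d, k < d) (if i == rev_ord k then 1 else 0).

Lemma rev_ord_eq d (i k : 'I_d) : (k == rev_ord i) = (i == rev_ord k).
Proof. by apply/eqP/eqP => ->; rewrite rev_ordK. Qed.

Lemma revmx_adj d : (revmx d)^t* = revmx d.
Proof.
apply/matrixP=> i k; rewrite !mxE rev_ord_eq.
by case: ifP => _; [exact: conjC1 | exact: conjC0].
Qed.

Lemma revmx_unitary d : revmx d \is unitarymx.
Proof.
apply/unitarymxP; rewrite revmx_adj; apply/matrixP=> i k.
rewrite !mxE (bigD1 (rev_ord i)) //= !mxE rev_ordK eqxx mul1r.
rewrite (inj_eq rev_ord_inj) big1 ?addr0 => [|l hl].
  by case: (i == k); rewrite ?mulr1n ?mulr0n.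
by rewrite !mxE -rev_ord_eq (negbTE hl) mul0r.
Qed.

Lemma revmx_diag d (a : nat -> R) (k : 'I_d) :
  complex.Re ((revmx d *m dg d a *m (revmx d)^t*) k k) = a (rev_ord k).
Proof.
rewrite revmx_adj /dg mul_mx_diag mxE (bigD1 (rev_ord k)) //= !mxE rev_ordK !eqxx.
rewrite mulr1 mul1r big1 ?addr0 ?mulr1n // => l hl.
by rewrite !mxE -rev_ord_eq (negbTE hl) !mul0r.
Qed.

(* The bound is attained by a unitary conjugation: rotate the eigenbasis of
   rho onto that of sigma, reversing the order of the eigenvectors. *)
Lemma relent_attained d rho sigma a b :
  posdef d rho -> posdef d sigma -> eigs_decreasing d rho a -> eigs_decreasing d sigma b ->
  exists U, unitary d U /\ relent d (conjm d U rho) sigma =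
  Cre (mtr d (mmul d rho (mlog d rho))) - rsum d (fun j => a j * log2 (b (d - 1 - j)%N)).
Proof.
move=> hr hs er es.
have [Ur [hUr [Erho [apos _]]]] := posdef_spectrum hr er.
have [Us [hUs [Esig [bpos _]]]] := posdef_spectrum hs es.
have Vr := proj1 (unitary_mx_of d Ur) hUr.
have Vs := proj1 (unitary_mx_of d Us) hUs.
set W := mx_of d Us *m revmx d.
have Wu : W \is unitarymx by rewrite mul_unitarymx ?revmx_unitary.
set U0 := W *m (mx_of d Ur)^t*.
exists (Mat_of U0); split.
  by apply/unitary_mx_of; rewrite Mat_ofK mul_unitarymx ?trmxC_unitary.
have EY : mx_of d (conjm d (Mat_of U0) rho) = mx_of d (Mat_of W) *m dg d a *m (mx_of d (Mat_of W))^t*.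
  rewrite mx_of_conjm !Mat_ofK Erho /U0 adjmxM trmxCK !mulmxA.
  by rewrite -(mulmxA W) unitary_adjmx // mulmx1 -(mulmxA _ _ (mx_of d Ur)) unitary_adjmx // mulmx1.
have hW : unitary d (Mat_of W) by apply/unitary_mx_of; rewrite Mat_ofK.
rewrite /relent (entropy_spectral hW apos EY) (entropy_spectral hUr apos Erho).
rewrite Cre_tr (mx_of_mlog hUs bpos Esig) rsumE tr_mul_spectral.
rewrite Mat_ofK in EY.
suff -> : \sum_(k < d) complex.Re (((mx_of d Us)^t* *m mx_of d (conjm d (Mat_of U0) rho)
    *m mx_of d Us) k k) * log2 (b k) = \sum_(j < d) a j * log2 (b (d - 1 - j)%N) by [].
transitivity (\sum_(k < d) a (rev_ord k) * log2 (b k)).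
  apply: eq_bigr => k _; rewrite EY /W adjmxM !mulmxA unitary_adjmx // mul1mx.
  by rewrite -(mulmxA _ ((mx_of d Us)^t*)) unitary_adjmx // mulmx1 revmx_diag.
rewrite [RHS](reindex_inj rev_ord_inj) /=; apply: eq_bigr => k _.
by have -> : (d - 1 - (d - k.+1) = k)%N by have := ltn_ord k; lia.
Qed.

Local Close Scope sesquilinear_scope.
Local Close Scope ring_scope.
Open Scope R_scope.

Theorem mainTheorem6 (d : nat) (rho sigma : Mat) (a b : nat -> R) :
  posdef d rho -> posdef d sigma ->
  eigs_decreasing d rho a -> eigs_decreasing d sigma b ->
  let rhs := Cre (mtr d (mmul d rho (mlog d rho)))
             - rsum d (fun j => a j * log2 (b (d - 1 - j)%nat)) in
  ((forall Phi, bistochastic d Phi -> relent d (Phi rho) sigma <= rhs) /\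
   (exists Phi, bistochastic d Phi /\ relent d (Phi rho) sigma = rhs)) /\
  ((forall U, unitary d U -> relent d (conjm d U rho) sigma <= rhs) /\
   (exists U, unitary d U /\ relent d (conjm d U rho) sigma = rhs)).
Proof.
move=> hr hs er es rhs.
have upper Phi : bistochastic d Phi -> relent d (Phi rho) sigma <= rhs.
  by move=> hPhi; apply/RleP; exact: bistochastic_relent_le.
have [U0 [hU0 attained]] := relent_attained hr hs er es.
split; split.
- exact: upper.
- by exists (conjm d U0); split; [exact: conjm_bistochastic | exact: attained].
- by move=> U hU; apply/upper/conjm_bistochastic.
- by exists U0.
Qed.
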